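(* For every positive integer $n$, every real $t\in[0,n)$ and every $p\in[0,1]$, if $B\sim\mathrm{Binom}(n,p)$ then \[ \mathbb{E}\Big[\exp\Big(t\cdot D\big((B/n,1-B/n)\,\|\,(p,1-p)\big)\Big)\Big]\leq\frac{1}{1-t/n}. \]
   Context: $D\big((q,1-q)\,\|\,(p,1-p)\big)=q\log\frac{q}{p}+(1-q)\log\frac{1-q}{1-p}$ is the Kullback--Leibler divergence between Bernoulli distributions (natural logarithm, convention $0\log(0/p)=0$). *)

From Stdlib Require Import Reals.
Open Scope R_scope.

Definition xlog_ratio (q p : R) : R :=
  if Req_EM_T q 0 then 0 else q * ln (q / p).

Definition KL_bern (q p : R) : R :=
  xlog_ratio q p + xlog_ratio (1 - q) (1 - p).

(* Expectation E[f(B)] for B ~ Binom(n,p):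
   sum_{k=0}^{n} C(n,k) p^k (1-p)^(n-k) f(k).  (sum_f_R0 g n = g 0 + ... + g n) *)
Definition binom_expect (n : nat) (p : R) (f : nat -> R) : R :=
  sum_f_R0 (fun k => C n k * p ^ k * (1 - p) ^ (n - k) * f k) n.

(* Write lam = t/n and q = k/n.  The k-th term of the expectation is
   C(n,k) (p^(1-lam) q^lam)^k ((1-p)^(1-lam) (1-q)^lam)^(n-k), so weighted AM-GM
   bounds it by C(n,k) u_k^k (1-u_k)^(n-k) with u_k = (1-lam) p + k lam/n.
   The sum of these bounds is an Abel-type sum:
     sum_k C(n,k) (x+kz)^k (s-x-kz)^(n-k) = sum_j n(n-1)...(n-j+1) z^j s^(n-j),
   because after expanding (s-x-kz)^(n-k) the coefficient of s^i is C(n,i) times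
   the (n-i)-th forward difference of the polynomial k |-> (x+kz)^(n-i) of degree n-i.
   For s = 1 and z = lam/n the j-th term is at most lam^j, whence the bound 1/(1-lam). *)

From Stdlib Require Import Reals Lra.
From Corelib Require Import ssreflect.
Open Scope R_scope.

Module AbelSum.

From mathcomp Require Import all_boot all_order all_algebra ring Rstruct.
Set Implicit Arguments.
Unset Strict Implicit.
Import Order.TTheory GRing.Theory Num.Theory.

Lemma ffactD n k i : (n ^_ (k + i) = n ^_ k * (n - k) ^_ i)%N.
Proof.
elim: i => [|i IHi]; first by rewrite addn0 ffactn0 muln1.
by rewrite addnS !ffactnSr IHi subnDA mulnA.
Qed.

Lemma bin_mul_bin_sub n k i : ('C(n, k) * 'C(n - k, i) = 'C(n, i) * 'C(n - i, k))%N.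
Proof.
have kifact_gt0 : (0 < k`! * i`!)%N by rewrite muln_gt0 !fact_gt0.
apply/eqP; rewrite -(eqn_pmul2r kifact_gt0).
rewrite mulnACA bin_ffact bin_ffact -ffactD.
by rewrite [(k`! * _)%N]mulnC mulnACA !bin_ffact -ffactD addnC.
Qed.

Lemma ffact_leq_expn n j : (n ^_ j <= n ^ j)%N.
Proof.
rewrite ffact_prod -[in (n ^ j)%N](card_ord j) -prod_nat_const.
by apply: leq_prod => i _; apply: leq_subr.
Qed.

Lemma sum_ord_widen0 (V : nmodType) a b (F : nat -> V) : (a <= b)%N ->
  (forall i, (a <= i)%N -> F i = 0%R) -> (\sum_(i < a) F i = \sum_(i < b) F i)%R.
Proof.
move=> le_ab F0; rewrite (big_ord_widen _ _ le_ab) big_mkcond.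
by apply: eq_bigr => i _; case: ltnP => // /F0 ->.
Qed.

Section AbelIdentity.

Local Open Scope ring_scope.

Variable R : comNzRingType.

Definition forward_diff m (f : nat -> R) :=
  \sum_(k < m.+1) (-1) ^+ (m - k) * 'C(m, k)%:R * f k.

Lemma forward_diffS m f :
  forward_diff m.+1 f = forward_diff m (fun k => f k.+1 - f k).
Proof.
have sign_shift k : (k <= m)%N -> (-1) ^+ (m.+1 - k) = - (-1) ^+ (m - k) :> R.
  by move=> le_km; rewrite subSn // exprS mulN1r.
rewrite /forward_diff big_ord_recl /=.
under eq_bigr => i _ do rewrite /bump /= subSS binS natrD mulrDr mulrDl.
under [RHS]eq_bigr => i _ do rewrite mulrBr.
rewrite big_split sumrB /= addrA addrC; congr (_ + _).
transitivity (\sum_(k < m.+2) (-1) ^+ (m.+1 - k) * 'C(m, k)%:R * f k).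
  by rewrite [RHS]big_ord_recl !bin0.
rewrite big_ord_recr /= bin_small // mulr0 mul0r addr0 -sumrN.
by apply: eq_bigr => k _; rewrite (sign_shift k (ltn_ord k)) !mulNr.
Qed.

Lemma eq_forward_diff m f g : f =1 g -> forward_diff m f = forward_diff m g.
Proof. by move=> eq_fg; apply: eq_bigr => k _; rewrite eq_fg. Qed.

Lemma forward_diff_sum m e (c : nat -> R) (F : nat -> nat -> R) :
  forward_diff m (fun k => \sum_(i < e) c i * F i k)
  = \sum_(i < e) c i * forward_diff m (F i).
Proof.
rewrite /forward_diff; under eq_bigr => k _ do rewrite big_distrr.
rewrite exchange_big; apply: eq_bigr => i _ /=; rewrite big_distrr.
by apply: eq_bigr => k _; rewrite mulrCA.
Qed.

Lemma forward_diff_affine_pow m e (x z : R) : (e <= m)%N ->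
  forward_diff m (fun k => (x + k%:R * z) ^+ e)
  = if e == m then m`!%:R * z ^+ m else 0.
Proof.
elim: m x e => [|m IHm] x e.
  by rewrite leqn0 => /eqP ->; rewrite /forward_diff big_ord1 !expr0 bin0 !mulr1.
move=> le_e_Sm; rewrite forward_diffS.
have binomial_step : (fun k => (x + k.+1%:R * z) ^+ e - (x + k%:R * z) ^+ e)
    =1 (fun k => \sum_(i < e) z ^+ (e - i) * 'C(e, i)%:R * (x + k%:R * z) ^+ i).
  move=> k; rewrite -[k.+1]addn1 natrD mulrDl mul1r addrA [_ + z]addrC exprDn.
  rewrite big_ord_recr /= subnn expr0 mul1r binn mulr1n addrK.
  by apply: eq_bigr => i _; rewrite -mulr_natr mulrAC.
rewrite (eq_forward_diff _ binomial_step) (forward_diff_sum _ _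
  (fun i => z ^+ (e - i) * 'C(e, i)%:R) (fun i k => (x + k%:R * z) ^+ i)).
rewrite (eq_bigr (fun i : 'I_e =>
           z ^+ (e - i) * 'C(e, i)%:R * if i == m :> nat then m`!%:R * z ^+ m else 0));
  last by move=> i _; rewrite IHm // -ltnS (leq_trans (ltn_ord i)).
case: (ltnP e m.+1) => [lt_e_Sm | le_Sm_e].
  rewrite (ltn_eqF lt_e_Sm) big1 // => i _.
  by rewrite (ltn_eqF (leq_trans (ltn_ord i) lt_e_Sm)) mulr0.
have -> : e = m.+1 by apply/eqP; rewrite eqn_leq le_e_Sm le_Sm_e.
rewrite eqxx big_ord_recr /= big1 ?add0r => [|i _]; last first.
  by rewrite (ltn_eqF (ltn_ord i)) mulr0.
by rewrite eqxx subSn // subnn binSn factS natrM expr1 exprS; ring.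
Qed.

Lemma forward_diff_widen m b f : (m < b)%N ->
  forward_diff m f = \sum_(k < b) (-1) ^+ (m - k) * 'C(m, k)%:R * f k.
Proof.
move=> lt_mb.
apply: (sum_ord_widen0 (F := fun k => (-1) ^+ (m - k) * 'C(m, k)%:R * f k)) => //.
by move=> k lt_mk; rewrite bin_small // mulr0 mul0r.
Qed.

Lemma abel_identity n (x z s : R) :
  \sum_(k < n.+1) 'C(n, k)%:R * (x + k%:R * z) ^+ k * (s - (x + k%:R * z)) ^+ (n - k)
  = \sum_(j < n.+1) (n ^_ j)%:R * z ^+ j * s ^+ (n - j).
Proof.
pose u k := x + k%:R * z.
under eq_bigr => k _ do rewrite -/(u k).
pose T k i := s ^+ i * (('C(n, k) * 'C(n - k, i))%:R * u k ^+ k * (- u k) ^+ (n - k - i)).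
have expand k : 'C(n, k)%:R * u k ^+ k * (s - u k) ^+ (n - k) = \sum_(i < n.+1) T k i.
  rewrite -(@sum_ord_widen0 _ (n - k).+1) => [||i lt_nk_i]; last 2 first.
  - by rewrite ltnS leq_subr.
  - by rewrite /T (@bin_small (n - k) i) // muln0 mulr0n !mul0r mulr0.
  rewrite [s - _]addrC (exprDn (- u k) s) big_distrr /=.
  by apply: eq_bigr => i _; rewrite /T natrM -mulr_natr; ring.
have inner i : (i <= n)%N ->
    \sum_(k < n.+1) T k i = s ^+ i * ('C(n, i)%:R * ((n - i)`!%:R * z ^+ (n - i))).
  move=> le_in; have := forward_diff_affine_pow x z (leqnn (n - i)); rewrite eqxx => <-.
  have lt_ni_Sn : (n - i < n.+1)%N by rewrite ltnS leq_subr.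
  rewrite (forward_diff_widen _ lt_ni_Sn) !big_distrr /=.
  apply: eq_bigr => k _; rewrite /T bin_mul_bin_sub.
  case: (leqP k (n - i)) => [le_k_ni | lt_ni_k]; last first.
    by rewrite (@bin_small (n - i) k) // !(muln0, mulr0n, mul0r, mulr0).
  have split_pow : u k ^+ (n - i) = u k ^+ k * u k ^+ (n - i - k).
    by rewrite -exprD subnKC.
  by rewrite split_pow natrM subnAC (exprNn (u k)); ring.
under eq_bigr => k _ do rewrite expand.
rewrite exchange_big /=.
transitivity (\sum_(i < n.+1) s ^+ i * ('C(n, i)%:R * ((n - i)`!%:R * z ^+ (n - i)))).
  by apply: eq_bigr => i _; apply: inner; rewrite -ltnS.
rewrite (reindex_inj rev_ord_inj) /=; apply: eq_bigr => j _.
have le_jn : (j <= n)%N by rewrite -ltnS.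
by rewrite subKn // bin_sub // [_ * (_ * z ^+ j)]mulrA -natrM bin_ffact mulrC.
Qed.

End AbelIdentity.

Section AbelBound.

Local Open Scope ring_scope.

Variable R : realFieldType.

Lemma geometric_sum_le (lam : R) m : 0 <= lam < 1 ->
  \sum_(j < m) lam ^+ j <= (1 - lam)^-1.
Proof.
case/andP => lam_ge0 lam_lt1; have gap_gt0 : 0 < 1 - lam by rewrite subr_gt0.
rewrite -(ler_pM2r gap_gt0) mulVf ?gt_eqF // mulrC -opprB mulNr -subrX1 opprB.
by rewrite lerBlDr lerDl exprn_ge0.
Qed.

Lemma abel_sum_le n (x lam : R) : (0 < n)%N -> 0 <= lam < 1 ->
  \sum_(k < n.+1) 'C(n, k)%:R * (x + k%:R * (lam / n%:R)) ^+ k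
                   * (1 - (x + k%:R * (lam / n%:R))) ^+ (n - k)
  <= (1 - lam)^-1.
Proof.
move=> n_gt0 lam_range; have /andP[lam_ge0 _] := lam_range.
rewrite abel_identity; apply: le_trans (geometric_sum_le n.+1 lam_range).
apply: ler_sum => j _; rewrite expr1n mulr1 expr_div_n mulrA.
rewrite ler_pdivrMr ?exprn_gt0 ?ltr0n // mulrC ler_wpM2l ?exprn_ge0 //.
by rewrite -natrX ler_nat ffact_leq_expn.
Qed.

End AbelBound.

Lemma C_INR_binomial n k : (k <= n)%N -> C n k = INR 'C(n, k).
Proof.
move=> le_kn; rewrite /C; have -> : Nat.sub n k = (n - k)%N by [].
rewrite !factE !INRE RdivE RmultE -(bin_fact le_kn) !natrM.
by field; rewrite !pnatr_eq0 -!lt0n !fact_gt0.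
Qed.

Lemma abel_sum_le_R n (x lam : R) : (0 < n)%coq_nat -> 0 <= lam < 1 ->
  sum_f_R0 (fun k => C n k * (x + INR k * (lam / INR n)) ^ k
                      * (1 - (x + INR k * (lam / INR n))) ^ (n - k)%coq_nat) n
  <= / (1 - lam).
Proof.
move=> /ssrnat.ltP n_gt0 [/RleP lam_ge0 /RltP lam_lt1]; apply/RleP.
rewrite sum_f_R0E big_mkord.
under eq_bigr => k _ do rewrite (@C_INR_binomial n k (ltn_ord k)) !RpowE !INRE.
by apply: abel_sum_le => //; rewrite lam_ge0.
Qed.

End AbelSum.

Lemma exp_tangent_le a b : exp a * (1 + (b - a)) <= exp b.
Proof.
have -> : exp b = exp a * exp (b - a) by rewrite -exp_plus; congr exp; ring.
by apply: Rmult_le_compat_l; [apply: Rlt_le; apply: exp_pos | apply: exp_ineq1_le].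
Qed.

Lemma exp_convex x y lam : 0 <= lam <= 1 ->
  exp ((1 - lam) * x + lam * y) <= (1 - lam) * exp x + lam * exp y.
Proof.
move=> lam_range; set m := (1 - lam) * x + lam * y.
have tangent_x := exp_tangent_le m x; have tangent_y := exp_tangent_le m y.
have : (1 - lam) * (exp m * (1 + (x - m))) + lam * (exp m * (1 + (y - m))) = exp m.
  by rewrite /m; ring.
nra.
Qed.

(* Weighted AM-GM: the left-hand side is a^(1-lam) q^lam. *)
Lemma mul_exp_ln_ratio_le a q lam : 0 <= a -> 0 < q -> 0 <= lam <= 1 ->
  a * exp (lam * ln (q / a)) <= (1 - lam) * a + lam * q.
Proof.
move=> a_ge0 q_gt0 lam_range; case: (Rle_lt_or_eq_dec _ _ a_ge0) => [a_gt0 | <-]; last first.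
  by rewrite Rmult_0_l; nra.
have -> : a * exp (lam * ln (q / a)) = exp ((1 - lam) * ln a + lam * ln q).
  have inv_a_gt0 : 0 < / a by apply: Rinv_0_lt_compat.
  rewrite /Rdiv ln_mult // ln_Rinv //.
  by rewrite -{1}(exp_ln a a_gt0) -exp_plus; congr exp; ring.
by have := exp_convex (ln a) (ln q) lam lam_range; rewrite !exp_ln.
Qed.

Lemma pow_mul_exp_ln_ratio_le k m a lam : 0 < m -> 0 <= a -> 0 <= lam <= 1 ->
  (a * exp (lam * ln (INR k / m / a))) ^ k
  <= ((1 - lam) * a + lam * (INR k / m)) ^ k.
Proof.
move=> m_gt0 a_ge0 lam_range; case: k => [|k]; first exact: Rle_refl.
apply: pow_incr; split.
  by apply: Rmult_le_pos a_ge0 _; apply: Rlt_le; apply: exp_pos.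
apply: mul_exp_ln_ratio_le => //.
by apply: Rdiv_lt_0_compat m_gt0; apply: lt_0_INR; apply: Nat.lt_0_succ.
Qed.

Lemma xlog_ratioE q p : xlog_ratio q p = q * ln (q / p).
Proof. by rewrite /xlog_ratio; case: Req_EM_T => [-> | _]; rewrite ?Rmult_0_l. Qed.

Lemma exp_INR_mul k y : exp (INR k * y) = exp y ^ k.
Proof.
elim: k => [|k IHk]; first by rewrite Rmult_0_l exp_0.
by rewrite S_INR Rmult_plus_distr_r Rmult_1_l exp_plus IHk /= Rmult_comm.
Qed.

Lemma exp_mul_KL_bern n k p lam : (0 < n)%nat -> (k <= n)%nat ->
  exp (lam * INR n * KL_bern (INR k / INR n) p)
  = exp (lam * ln (INR k / INR n / p)) ^ k
    * exp (lam * ln (INR (n - k) / INR n / (1 - p))) ^ (n - k).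
Proof.
move=> n_gt0 le_kn; have n_pos : 0 < INR n by apply: lt_0_INR.
have compl : 1 - INR k / INR n = INR (n - k) / INR n by rewrite minus_INR //; field; lra.
rewrite /KL_bern !xlog_ratioE compl -!exp_INR_mul -exp_plus; congr exp.
by field; lra.
Qed.

Lemma binomial_weight_exp_KL_le n k p lam :
  (0 < n)%nat -> (k <= n)%nat -> 0 <= p <= 1 -> 0 <= lam <= 1 ->
  p ^ k * (1 - p) ^ (n - k) * exp (lam * INR n * KL_bern (INR k / INR n) p)
  <= ((1 - lam) * p + INR k * (lam / INR n)) ^ k
     * (1 - ((1 - lam) * p + INR k * (lam / INR n))) ^ (n - k).
Proof.
move=> n_gt0 le_kn [p_ge0 p_le1] lam_range.
have n_pos : 0 < INR n by apply: lt_0_INR.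
rewrite exp_mul_KL_bern //.
set e1 := exp (lam * _); set e2 := exp (lam * _).
have -> : p ^ k * (1 - p) ^ (n - k) * (e1 ^ k * e2 ^ (n - k))
          = (p * e1) ^ k * ((1 - p) * e2) ^ (n - k) by rewrite !Rpow_mult_distr; ring.
have -> : (1 - lam) * p + INR k * (lam / INR n) = (1 - lam) * p + lam * (INR k / INR n).
  by field; lra.
have -> : 1 - ((1 - lam) * p + lam * (INR k / INR n))
          = (1 - lam) * (1 - p) + lam * (INR (n - k) / INR n).
  by rewrite minus_INR //; field; lra.
apply: Rmult_le_compat.
- by apply: pow_le; apply: Rmult_le_pos p_ge0 _; apply: Rlt_le; apply: exp_pos.
- by apply: pow_le; apply: Rmult_le_pos; [lra | apply: Rlt_le; apply: exp_pos].
- exact: pow_mul_exp_ln_ratio_le.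
- by apply: pow_mul_exp_ln_ratio_le => //; lra.
Qed.

Lemma C_ge0 n k : 0 <= C n k.
Proof.
rewrite /C; apply: Rmult_le_pos; first exact: pos_INR.
by apply/Rlt_le/Rinv_0_lt_compat/Rmult_lt_0_compat; apply: INR_fact_lt_0.
Qed.

Theorem proposition2p5 :
  forall (n : nat) (t p : R),
    (0 < n)%nat ->
    0 <= t < INR n ->
    0 <= p <= 1 ->
    binom_expect n p (fun k => exp (t * KL_bern (INR k / INR n) p))
      <= 1 / (1 - t / INR n).
Proof.
move=> n t p n_gt0 [t_ge0 t_lt_n] p_range.
have n_pos : 0 < INR n by apply: lt_0_INR.
set lam := t / INR n.
have t_eq : t = lam * INR n by rewrite /lam; field; lra.
have [lam_ge0 lam_lt1] : 0 <= lam < 1 by split; nra.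
rewrite {1}t_eq Rdiv_1_l /binom_expect.
have abel_bound := AbelSum.abel_sum_le_R ((1 - lam) * p) n_gt0 (conj lam_ge0 lam_lt1).
apply: (Rle_trans _ _ _ _ abel_bound); apply: sum_Rle => k le_kn.
have lam_le1 : 0 <= lam <= 1 by split; lra.
have := binomial_weight_exp_KL_le n k p lam n_gt0 le_kn p_range lam_le1.
have := C_ge0 n k; nra.
Qed.
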